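(* Let $X$ be a topological space in which every open set is a union of countably many clopen sets. If $X$ is a QN space, then $X$ is a wQN$_*$ space.
   Context: Functions $f_n:X\to\mathbb{R}$ converge quasi-normally to $0$ if there are positive reals $\epsilon_n\to0$ such that for each $x\in X$, $|f_n(x)|<\epsilon_n$ for all but finitely many $n$. $X$ is a QN space if every sequence of continuous real-valued functions on $X$ converging pointwise to $0$ converges to $0$ quasi-normally. $X$ is wQN$_*$ if every sequence of lower semi-continuous real-valued functions on $X$ converging pointwise to $0$ has a subsequence converging to $0$ quasi-normally. *)

From Stdlib Require Import Reals.
Open Scope R_scope.

Record TopSpace := {
  carrier :> Type;
  is_open : (carrier -> Prop) -> Prop;
  open_full : is_open (fun _ => True);
  open_inter : forall U V, is_open U -> is_open V -> is_open (fun x => U x /\ V x);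
  open_union : forall F : (carrier -> Prop) -> Prop,
      (forall U, F U -> is_open U) -> is_open (fun x => exists U, F U /\ U x)
}.

Definition is_closed {X : TopSpace} (C : X -> Prop) : Prop :=
  is_open X (fun x => ~ C x).

Definition is_clopen {X : TopSpace} (C : X -> Prop) : Prop :=
  is_open X C /\ is_closed C.

(* Every open set is the union of countably many clopen sets
   (countable families indexed by nat; repetitions / the empty set allowed). *)
Definition open_countable_union_clopen (X : TopSpace) : Prop :=
  forall U : X -> Prop, is_open X U ->
    exists C : nat -> (X -> Prop),
      (forall n, is_clopen (C n)) /\ (forall x, U x <-> exists n, C n x).

Definition continuous_real {X : TopSpace} (f : X -> R) : Prop :=
  forall V : R -> Prop, open_set V -> is_open X (fun x => V (f x)).

Definition lsc_real {X : TopSpace} (f : X -> R) : Prop :=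
  forall a : R, is_open X (fun x => a < f x).

Definition pointwise_cv_0 {X : TopSpace} (f : nat -> X -> R) : Prop :=
  forall x : X, Un_cv (fun n => f n x) 0.

Definition qn_cv_0 {X : TopSpace} (f : nat -> X -> R) : Prop :=
  exists eps : nat -> R,
    (forall n, 0 < eps n) /\ Un_cv eps 0 /\
    (forall x : X, exists N : nat, forall n : nat, (N <= n)%nat -> Rabs (f n x) < eps n).

Definition QN_space (X : TopSpace) : Prop :=
  forall f : nat -> X -> R,
    (forall n, continuous_real (f n)) -> pointwise_cv_0 f -> qn_cv_0 f.

Definition wQN_star_space (X : TopSpace) : Prop :=
  forall f : nat -> X -> R,
    (forall n, lsc_real (f n)) -> pointwise_cv_0 f ->
    exists phi : nat -> nat,
      (forall n, (phi n < phi (S n))%nat) /\ qn_cv_0 (fun n => f (phi n)).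


(* The superlevel sets {f_n > 2^-k} and {f_n > -2^-k} are open, hence countable unions of
   clopen pieces.  Applying QN to weighted indicators of these pieces shows that at every
   point, for all large n, finitely many pieces (a number depending only on n and k) already
   suffice, so the superlevel sets can be replaced by clopen sets.  The locally constant
   functions g_n = max_{k <= n} 2^-k [|f_n| is at least about 2^-k] tend to 0 pointwise and
   control |f_n| up to a factor 2 and an error 2^-n, so a second application of QN yields a
   quasi-normal bound for the whole sequence (f_n); no subsequence is needed. *)

From Stdlib Require Import Reals Lra Lia Wf_nat Cantor.
From Stdlib Require Import Classical ClassicalEpsilon FunctionalExtensionality PropExtensionality.
Open Scope R_scope.

Lemma is_open_ext (X : TopSpace) (U V : X -> Prop) :
  (forall x, U x <-> V x) -> is_open X U -> is_open X V.
Proof.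
  intros UV HU.
  replace V with U; [exact HU |].
  apply functional_extensionality; intro x; apply propositional_extensionality, UV.
Qed.

Lemma is_open_empty (X : TopSpace) : is_open X (fun _ => False).
Proof.
  apply (is_open_ext X (fun x => exists U, (fun _ : X -> Prop => False) U /\ U x)).
  - intro x; split; [intros [U [[] _]] | intros []].
  - apply open_union; intros U [].
Qed.

Lemma is_open_or (X : TopSpace) (U V : X -> Prop) :
  is_open X U -> is_open X V -> is_open X (fun x => U x \/ V x).
Proof.
  intros HU HV.
  apply (is_open_ext X (fun x => exists W, (W = U \/ W = V) /\ W x)).
  - intro x; split.
    + intros [W [[-> | ->] HW]]; auto.
    + intros [H | H]; eauto.
  - apply open_union; intros W [-> | ->]; assumption.
Qed.

Lemma is_clopen_ext (X : TopSpace) (A B : X -> Prop) :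
  (forall x, A x <-> B x) -> is_clopen A -> is_clopen B.
Proof.
  intros AB [HA HnA]; split.
  - exact (is_open_ext X A B AB HA).
  - apply (is_open_ext X (fun x => ~ A x)); [intro x; rewrite AB; tauto | exact HnA].
Qed.

Lemma is_clopen_not (X : TopSpace) (A : X -> Prop) :
  is_clopen A -> is_clopen (fun x => ~ A x).
Proof.
  intros [HA HnA]; split; [exact HnA |].
  apply (is_open_ext X A); [intro x; split; [tauto | apply NNPP] | exact HA].
Qed.

Lemma is_clopen_and (X : TopSpace) (A B : X -> Prop) :
  is_clopen A -> is_clopen B -> is_clopen (fun x => A x /\ B x).
Proof.
  intros [HA HnA] [HB HnB]; split.
  - now apply open_inter.
  - apply (is_open_ext X (fun x => ~ A x \/ ~ B x)); [intro x; split; [tauto | apply not_and_or] |].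
    now apply is_open_or.
Qed.

Lemma is_clopen_or (X : TopSpace) (A B : X -> Prop) :
  is_clopen A -> is_clopen B -> is_clopen (fun x => A x \/ B x).
Proof.
  intros HA HB.
  apply (is_clopen_ext X (fun x => ~ (~ A x /\ ~ B x))); [intro x; tauto |].
  now apply is_clopen_not, is_clopen_and; apply is_clopen_not.
Qed.

Lemma is_clopen_forall_lt (X : TopSpace) (C : nat -> X -> Prop) :
  (forall j, is_clopen (C j)) -> forall n, is_clopen (fun x => forall j, (j < n)%nat -> C j x).
Proof.
  intros HC n; induction n as [| n IH].
  - apply (is_clopen_ext X (fun _ => True)); [intro x; split; [intros _ j Hj; lia | auto] |].
    split; [apply open_full |].
    apply (is_open_ext X (fun _ => False)); [tauto | apply is_open_empty].
  - apply (is_clopen_ext X (fun x => (forall j, (j < n)%nat -> C j x) /\ C n x)).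
    + intro x; split.
      * intros [Hlt Hn] j Hj.
        destruct (Nat.eq_dec j n) as [-> | Hne]; [exact Hn | apply Hlt; lia].
      * intro H; split; [intros j Hj | ]; apply H; lia.
    + now apply is_clopen_and.
Qed.

Lemma is_clopen_exists_lt (X : TopSpace) (C : nat -> X -> Prop) :
  (forall j, is_clopen (C j)) -> forall n, is_clopen (fun x => exists j, (j < n)%nat /\ C j x).
Proof.
  intros HC n.
  apply (is_clopen_ext X (fun x => ~ forall j, (j < n)%nat -> ~ C j x)).
  - intro x; split.
    + intro H; apply NNPP; intro Hno; apply H; intros j Hj Cj; apply Hno; eauto.
    + intros [j [Hj Cj]] H; exact (H j Hj Cj).
  - apply is_clopen_not, is_clopen_forall_lt; intro j; now apply is_clopen_not.
Qed.

Definition locally_constant {X : TopSpace} (g : X -> R) : Prop :=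
  forall x, exists U, is_open X U /\ U x /\ forall y, U y -> g y = g x.

Lemma locally_constant_continuous (X : TopSpace) (g : X -> R) :
  locally_constant g -> continuous_real g.
Proof.
  intros Hg V _.
  apply (is_open_ext X (fun x => exists U, (is_open X U /\ forall y, U y -> V (g y)) /\ U x)).
  - intro x; split.
    + intros [U [[_ HUV] Ux]]; now apply HUV.
    + intro Vx; destruct (Hg x) as [U [HU [Ux Hconst]]].
      exists U; repeat split; [exact HU | | exact Ux].
      intros y Uy; now rewrite Hconst.
  - apply open_union; intros U [HU _]; exact HU.
Qed.

Lemma locally_constant_max (X : TopSpace) (g h : X -> R) :
  locally_constant g -> locally_constant h -> locally_constant (fun x => Rmax (g x) (h x)).
Proof.
  intros Hg Hh x.
  destruct (Hg x) as [U [HU [Ux Ug]]], (Hh x) as [V [HV [Vx Vh]]].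
  exists (fun y => U y /\ V y); repeat split; [now apply open_inter | exact Ux | exact Vx |].
  intros y [Uy Vy]; now rewrite Ug, Vh.
Qed.

Definition indicator {X : Type} (A : X -> Prop) (c : R) (x : X) : R :=
  if excluded_middle_informative (A x) then c else 0.

Lemma indicator_in {X : Type} (A : X -> Prop) c x : A x -> indicator A c x = c.
Proof. unfold indicator; destruct (excluded_middle_informative (A x)); tauto. Qed.

Lemma indicator_out {X : Type} (A : X -> Prop) c x : ~ A x -> indicator A c x = 0.
Proof. unfold indicator; destruct (excluded_middle_informative (A x)); tauto. Qed.

Lemma indicator_nonneg {X : Type} (A : X -> Prop) c x : 0 <= c -> 0 <= indicator A c x.
Proof. unfold indicator; destruct (excluded_middle_informative (A x)); lra. Qed.

Lemma locally_constant_indicator (X : TopSpace) (A : X -> Prop) c :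
  is_clopen A -> locally_constant (indicator A c).
Proof.
  intros [HA HnA] x.
  destruct (classic (A x)) as [Ax | nAx].
  - exists A; repeat split; [exact HA | exact Ax |].
    intros y Ay; now rewrite !indicator_in.
  - exists (fun y => ~ A y); repeat split; [exact HnA | exact nAx |].
    intros y nAy; now rewrite !indicator_out.
Qed.

Fixpoint max_upto (T : nat -> R) (n : nat) : R :=
  match n with O => T O | S n' => Rmax (max_upto T n') (T (S n')) end.

Lemma max_upto_ge T n k : (k <= n)%nat -> T k <= max_upto T n.
Proof.
  induction n as [| n IH]; intro Hk; simpl.
  - replace k with 0%nat by lia; lra.
  - destruct (Nat.eq_dec k (S n)) as [-> | Hne]; [apply Rmax_r |].
    eapply Rle_trans; [apply IH; lia | apply Rmax_l].
Qed.

Lemma max_upto_lt T n e : (forall k, (k <= n)%nat -> T k < e) -> max_upto T n < e.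
Proof.
  induction n as [| n IH]; intro H; simpl; [apply H; lia |].
  apply Rmax_lub_lt; [apply IH; intros k Hk | ]; apply H; lia.
Qed.

Lemma locally_constant_max_upto (X : TopSpace) (T : nat -> X -> R) n :
  (forall k, locally_constant (T k)) -> locally_constant (fun x => max_upto (fun k => T k x) n).
Proof.
  intro HT; induction n as [| n IH]; simpl; [apply HT | now apply locally_constant_max].
Qed.

Lemma eventually_forall_le (P : nat -> nat -> Prop) :
  (forall k, exists N, forall n, (N <= n)%nat -> P k n) ->
  forall K, exists N, forall n, (N <= n)%nat -> forall k, (k <= K)%nat -> P k n.
Proof.
  intros HP K; induction K as [| K [N1 HN1]].
  - destruct (HP 0%nat) as [N HN]; exists N; intros n Hn k Hk.
    replace k with 0%nat by lia; auto.
  - destruct (HP (S K)) as [N2 HN2]; exists (Nat.max N1 N2); intros n Hn k Hk.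
    destruct (Nat.eq_dec k (S K)) as [-> | Hne]; [apply HN2 | apply HN1]; lia.
Qed.

Definition level (k : nat) : R := / 2 ^ k.

Lemma level_pos k : 0 < level k.
Proof. apply Rinv_0_lt_compat, pow_lt; lra. Qed.

Lemma level_S k : level (S k) = level k / 2.
Proof. unfold level; simpl; field; apply pow_nonzero; lra. Qed.

Lemma level_le j k : (j <= k)%nat -> level k <= level j.
Proof.
  intro Hjk; apply Rinv_le_contravar; [apply pow_lt; lra | apply Rle_pow; [lra | exact Hjk]].
Qed.

Lemma level_cv : Un_cv level 0.
Proof.
  intros e He; destruct (cv_pow_half 1 e He) as [N HN]; exists N; intros n Hn.
  specialize (HN n Hn); unfold level; unfold Rdiv in HN; now rewrite Rmult_1_l in HN.
Qed.

Lemma level_eventually_lt e : 0 < e -> exists K, forall k, (K <= k)%nat -> level k < e.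
Proof.
  intro He; destruct (level_cv e He) as [K HK]; exists K; intros k Hk.
  specialize (HK k Hk); unfold Rdist in HK; rewrite Rminus_0_r in HK.
  pose proof (Rle_abs (level k)); lra.
Qed.

Section QuasiNormal.

Variable X : TopSpace.
Hypothesis HQN : QN_space X.

(* The functions [level p] times the indicator of [A p m], enumerated along
   [m + p <= to_nat (p, m)], converge pointwise to 0 because each [x] lies in at most
   one [A p m] per [p]; comparing the quasi-normal bound with [level p] caps [m]. *)
Lemma QN_disjoint_clopen_bounded (A : nat -> nat -> X -> Prop) :
  (forall p m, is_clopen (A p m)) ->
  (forall x p m m', A p m x -> A p m' x -> m = m') ->
  exists (J : nat -> nat) (N : X -> nat),
    forall x p m, (N x <= p)%nat -> A p m x -> (m < J p)%nat.
Proof.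
  intros HA Huniq.
  set (t := fun i x => let '(p, m) := of_nat i in indicator (A p m) (level p) x).
  assert (t_at : forall p m x, A p m x -> t (to_nat (p, m)) x = level p).
  { intros p m x Ha; unfold t; rewrite cancel_of_to; now apply indicator_in. }
  destruct (HQN t) as [eta [_ [Heta Hqn]]].
  - intro i; apply locally_constant_continuous; unfold t.
    destruct (of_nat i) as [p m]; now apply locally_constant_indicator.
  - intros x e He.
    destruct (level_eventually_lt e He) as [K HK].
    assert (Hfin : forall p, exists N, forall i, (N <= i)%nat ->
                     forall m, A p m x -> (to_nat (p, m) < i)%nat).
    { intro p; destruct (classic (exists m, A p m x)) as [[m Ha] | Hno].
      - exists (S (to_nat (p, m))); intros i Hi m' Ha'.
        rewrite (Huniq x p m' m Ha' Ha); lia.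
      - exists 0%nat; intros i _ m' Ha'; exfalso; eauto. }
    destruct (eventually_forall_le _ Hfin K) as [N HN]; exists N; intros i Hi.
    unfold Rdist, t; rewrite Rminus_0_r.
    rewrite <- (cancel_to_of i) in Hi |- *; rewrite cancel_of_to.
    destruct (of_nat i) as [p m].
    rewrite Rabs_right by (apply Rle_ge, indicator_nonneg, Rlt_le, level_pos).
    destruct (classic (A p m x)) as [Ha | nA]; [| rewrite indicator_out by exact nA; lra].
    rewrite indicator_in by exact Ha.
    destruct (Nat.le_gt_cases p K) as [HpK | HpK].
    + specialize (HN _ Hi p HpK m Ha); lia.
    + apply HK; lia.
  - destruct (choice (fun p J => forall i, (J <= i)%nat -> Rdist (eta i) 0 < level p))
      as [J HJ]; [intro p; apply Heta, level_pos |].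
    destruct (choice (fun x N => forall i, (N <= i)%nat -> Rabs (t i x) < eta i))
      as [N HN]; [exact Hqn |].
    exists J, N; intros x p m Hp Ha.
    destruct (Nat.lt_ge_cases m (J p)) as [Hm | Hm]; [exact Hm | exfalso].
    pose proof (to_nat_non_decreasing p m) as Hi.
    specialize (HJ p (to_nat (p, m)) ltac:(lia)); specialize (HN x (to_nat (p, m)) ltac:(lia)).
    rewrite t_at in HN by exact Ha.
    unfold Rdist in HJ; rewrite Rminus_0_r in HJ.
    pose proof (Rle_abs (eta (to_nat (p, m)))); pose proof (Rle_abs (level p)); lra.
Qed.

Lemma QN_clopen_levels (bad : nat -> nat -> X -> Prop) :
  (forall n k, is_clopen (bad n k)) ->
  (forall x k, exists N, forall n, (N <= n)%nat -> ~ bad n k x) ->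
  exists d : nat -> R, (forall n, 0 < d n) /\ Un_cv d 0 /\
    forall x, exists M, forall n k, (M <= n)%nat -> (k <= n)%nat -> bad n k x -> level k < d n.
Proof.
  intros Hbad Hev.
  set (g := fun n x => max_upto (fun k => indicator (bad n k) (level k) x) n).
  assert (g_nonneg : forall n x, 0 <= g n x).
  { intros n x; eapply Rle_trans; [| apply (max_upto_ge _ n 0%nat); lia].
    apply indicator_nonneg, Rlt_le, level_pos. }
  destruct (HQN g) as [d [dpos [dcv Hd]]].
  - intro n; apply locally_constant_continuous, (locally_constant_max_upto X).
    intro k; apply locally_constant_indicator, Hbad.
  - intros x e He.
    destruct (level_eventually_lt e He) as [K HK].
    destruct (eventually_forall_le (fun k n => ~ bad n k x) (Hev x) K) as [N HN].
    exists N; intros n Hn.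
    unfold Rdist; rewrite Rminus_0_r, Rabs_right by (apply Rle_ge, g_nonneg).
    apply max_upto_lt; intros k _.
    destruct (Nat.le_gt_cases k K) as [HkK | HkK].
    + rewrite indicator_out by (apply HN; lia); lra.
    + unfold indicator; destruct (excluded_middle_informative (bad n k x)); [apply HK; lia | lra].
  - exists d; split; [exact dpos | split; [exact dcv |]].
    intro x; destruct (Hd x) as [M HM]; exists M; intros n k Hn Hk Hb.
    specialize (HM n Hn); rewrite Rabs_right in HM by (apply Rle_ge, g_nonneg).
    eapply Rle_lt_trans; [| exact HM].
    rewrite <- (indicator_in (bad n k) (level k) x Hb).
    exact (max_upto_ge (fun k => indicator (bad n k) (level k) x) n k Hk).
Qed.

Hypothesis HX : open_countable_union_clopen X.

Lemma QN_clopen_inner_approx (U : nat -> X -> Prop) :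
  (forall p, is_open X (U p)) ->
  exists B : nat -> X -> Prop,
    (forall p, is_clopen (B p)) /\ (forall p x, B p x -> U p x) /\
    forall x, exists N, forall p, (N <= p)%nat -> U p x -> B p x.
Proof.
  intro HU.
  destruct (choice (fun p (C : nat -> X -> Prop) =>
                      (forall m, is_clopen (C m)) /\ forall x, U p x <-> exists m, C m x))
    as [C HC]; [intro p; exact (HX (U p) (HU p)) |].
  destruct (QN_disjoint_clopen_bounded
              (fun p m x => C p m x /\ forall j, (j < m)%nat -> ~ C p j x)) as [J [N HJ]].
  - intros p m; apply is_clopen_and; [apply HC |].
    apply is_clopen_forall_lt; intro j; apply is_clopen_not, HC.
  - intros x p m m' [Cm Hm] [Cm' Hm'].
    destruct (Nat.lt_total m m') as [Hlt | [Heq | Hlt]];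
      [exact (False_ind _ (Hm' m Hlt Cm)) | exact Heq | exact (False_ind _ (Hm m' Hlt Cm'))].
  - exists (fun p x => exists m, (m < J p)%nat /\ C p m x); split; [| split].
    + intro p; apply is_clopen_exists_lt; apply HC.
    + intros p x [m [_ Cm]]; apply HC; eauto.
    + intro x; exists (N x); intros p Hp Ux.
      apply HC in Ux.
      destruct (dec_inh_nat_subset_has_unique_least_element (fun m => C p m x))
        as [m [[Cm Hleast] _]]; [intro m; apply classic | exact Ux |].
      exists m; split; [| exact Cm].
      apply (HJ x p m Hp); split; [exact Cm |].
      intros j Hj Cj; specialize (Hleast j Cj); lia.
Qed.

Lemma QN_clopen_inner_approx2 (U : nat -> nat -> X -> Prop) :
  (forall n k, is_open X (U n k)) ->
  exists B : nat -> nat -> X -> Prop,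
    (forall n k, is_clopen (B n k)) /\ (forall n k x, B n k x -> U n k x) /\
    forall x, exists N, forall n k, (N <= n)%nat -> U n k x -> B n k x.
Proof.
  intro HU.
  destruct (QN_clopen_inner_approx (fun p => let '(n, k) := of_nat p in U n k))
    as [B [HBc [HBsub HBev]]]; [intro p; destruct (of_nat p); apply HU |].
  exists (fun n k => B (to_nat (n, k))); split; [| split].
  - intros n k; apply HBc.
  - intros n k x Bx; specialize (HBsub _ x Bx); now rewrite cancel_of_to in HBsub.
  - intro x; destruct (HBev x) as [N HN]; exists N; intros n k Hn Ux.
    pose proof (to_nat_non_decreasing n k).
    apply HN; [lia | now rewrite cancel_of_to].
Qed.

(* [bad n k] is a clopen stand-in for [level k < |f n x|]; the two inclusions hold only
   for large [n], which is all that matters. *)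
Lemma lsc_clopen_level_sets (f : nat -> X -> R) :
  (forall n, lsc_real (f n)) -> pointwise_cv_0 f ->
  exists bad : nat -> nat -> X -> Prop,
    (forall n k, is_clopen (bad n k)) /\
    (forall x k, exists N, forall n, (N <= n)%nat -> ~ bad n k x) /\
    forall x, exists N, forall n k, (N <= n)%nat -> level k < Rabs (f n x) -> bad n k x.
Proof.
  intros Hlsc Hcv.
  destruct (QN_clopen_inner_approx2 (fun n k x => level k < f n x))
    as [BP [BPc [BPsub BPev]]]; [intros n k; apply Hlsc |].
  destruct (QN_clopen_inner_approx2 (fun n k x => - level k < f n x))
    as [BQ [BQc [BQsub BQev]]]; [intros n k; apply Hlsc |].
  exists (fun n k x => BP n k x \/ ~ BQ n k x); split; [| split].
  - intros n k; apply is_clopen_or; [apply BPc | apply is_clopen_not, BQc].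
  - intros x k.
    destruct (Hcv x (level k) (level_pos k)) as [N1 HN1], (BQev x) as [N2 HN2].
    exists (Nat.max N1 N2); intros n Hn Hb.
    specialize (HN1 n ltac:(lia)); unfold Rdist in HN1; rewrite Rminus_0_r in HN1.
    apply Rabs_def2 in HN1.
    destruct Hb as [HP | HQ]; [specialize (BPsub _ _ _ HP); lra |].
    apply HQ, HN2; [lia | lra].
  - intro x; destruct (BPev x) as [N HN]; exists N; intros n k Hn Hlt.
    destruct (Rle_lt_dec 0 (f n x)) as [Hf | Hf].
    + left; apply HN; [exact Hn | now rewrite Rabs_right in Hlt by lra].
    + right; intro HQ; apply BQsub in HQ; rewrite Rabs_left in Hlt by exact Hf; lra.
Qed.

End QuasiNormal.

(* Halving from [level 0 = 1], some [level k] lies in [[b/2, b)]; it must stay below [d]. *)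
Lemma level_scale_bound (b d : R) (n : nat) :
  0 <= d <= 1 ->
  (forall k, (k <= n)%nat -> level k < b -> level k < d) ->
  b < 2 * d + 2 * level n.
Proof.
  intros Hd Hlevel.
  destruct (Rlt_le_dec b (2 * d + 2 * level n)) as [Hlt | Hge]; [exact Hlt | exfalso].
  pose proof (level_pos n) as Hn.
  assert (Hbelow : forall j, (j <= n)%nat -> b <= level j).
  { intro j; induction j as [| j IH]; intro Hj.
    - destruct (Rlt_le_dec (level 0) b) as [H0 | H0]; [| exact H0].
      specialize (Hlevel 0%nat Hj H0); unfold level in Hlevel; simpl in Hlevel; lra.
    - destruct (Rlt_le_dec (level (S j)) b) as [HS | HS]; [| exact HS].
      specialize (Hlevel (S j) Hj HS); specialize (IH ltac:(lia)).
      rewrite level_S in Hlevel; lra. }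
  specialize (Hbelow n (le_n n)); lra.
Qed.

Lemma Un_cv_const (c : R) : Un_cv (fun _ => c) c.
Proof. intros e He; exists 0%nat; intros n _; unfold Rdist; rewrite Rminus_diag, Rabs_R0; lra. Qed.

Theorem mainTheorem12 (X : TopSpace) :
  open_countable_union_clopen X -> QN_space X -> wQN_star_space X.
Proof.
  intros HX HQN f Hlsc Hcv.
  exists (fun n => n); split; [intro n; lia |].
  destruct (lsc_clopen_level_sets X HQN HX f Hlsc Hcv) as [bad [Hbad [Hvanish Hcover]]].
  destruct (QN_clopen_levels X HQN bad Hbad Hvanish) as [d [dpos [dcv Hd]]].
  exists (fun n => 2 * d n + 2 * level n); split; [| split].
  - intro n; pose proof (dpos n); pose proof (level_pos n); lra.
  - replace 0 with (2 * 0 + 2 * 0) by ring.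
    apply CV_plus; apply CV_mult; try apply Un_cv_const; [exact dcv | exact level_cv].
  - intro x.
    destruct (Hd x) as [M HM], (Hcover x) as [N HN], (dcv 1 Rlt_0_1) as [N' HN'].
    exists (Nat.max M (Nat.max N N')); intros n Hn; cbv beta.
    specialize (HN' n ltac:(lia)); unfold Rdist in HN'; rewrite Rminus_0_r in HN'.
    apply Rabs_def2 in HN'.
    apply level_scale_bound; [pose proof (dpos n); lra |].
    intros k Hk Hlt; apply (HM n k); [lia | exact Hk | apply HN; [lia | exact Hlt]].
Qed.
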